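(* Let $\mathscr{C}$ be a hereditary graph class closed under disjoint union, and let $\Pi$ be a $\rho$-local minimization problem which is cuttable for $\mathscr{C}$ with parameter $\beta>0$. Then for every integer $r\ge0$ and real $\alpha>0$, every deterministic LOCAL algorithm $\mathsf{A}$ with round complexity $r$ that does not require polynomial identifiers and is an $\alpha$-approximation for $\Pi$ on $\mathscr{C}$ is an $(r+1)$-uniform $\alpha\beta$-approximation for $\Pi$ on $\mathscr{C}$.
   Context: Hereditary: closed under vertex deletion. $N^t[S]$ is the set of vertices at distance at most $t$ from $S$. Deterministic LOCAL model: distinct positive integer identifiers, synchronous rounds of unbounded message exchange with neighbours and unbounded local computation; with round complexity $r$ the output of a vertex $v$ depends only on the vertices at distance at most $r$ from $v$, their identifiers, and the edges incident to them. ''Does not require polynomial identifiers'': guarantees hold for every assignment of distinct positive integer identifiers. $\mathsf{A}(G)$ is the output set. Problems: $\Pi$ (feasible solutions are vertex subsets) is $\rho$-local if there is a LOCAL verifier with round complexity $\rho$ which accepts at every vertex iff the given $S\subseteq V(G)$ is feasible; $S$ is feasible on $X$ if the verifier accepts at every vertex of $X$; $\mathrm{OPT}_\Pi(G,X)$ is the minimum size of a set feasible on $X$; $\mathrm{OPT}_\Pi(G)=\mathrm{OPT}_\Pi(G,V(G))$. $\Pi$ is cuttable for $\mathscr{C}$ with parameter $\beta$ if for all $G\in\mathscr{C}$ and $X\subseteq V(G)$ there is $Y$ with $X\subseteq Y\subseteq V(G)$ and $\mathrm{OPT}_\Pi(G[Y])\le\beta\,\mathrm{OPT}_\Pi(G,X)$.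 $\mathsf{A}$ is an $\alpha$-approximation on $\mathscr{C}$ if on each $G\in\mathscr{C}$ it outputs a feasible solution of size at most $\alpha\,\mathrm{OPT}_\Pi(G)$; it is a $k$-uniform $\gamma$-approximation if it outputs feasible solutions and $|\mathsf{A}(G)\cap S|\le\gamma\,\mathrm{OPT}_\Pi(G,N^k[S])$ for all $G\in\mathscr{C}$ and $S\subseteq V(G)$. *)

From HB Require Import structures.
From mathcomp Require Import all_boot all_order all_algebra.
From mathcomp Require Export reals.
Set Implicit Arguments. Unset Strict Implicit. Unset Printing Implicit Defensive.
Import Order.TTheory GRing.Theory Num.Theory.

Record sgraph := SGraph {
  vertex :> finType;
  adj : rel vertex;
  adj_sym : symmetric adj;
  adj_irr : irreflexive adj }.

Definition nbhd (G : sgraph) (t : nat) (S : {set G}) : {set G} :=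
  iter t (fun A : {set G} => A :|: [set y | [exists x in A, adj x y]]) S.

Definition ball (G : sgraph) (t : nat) (v : G) : {set G} := nbhd t [set v].

Section Induced.
Variables (G : sgraph) (U : {set G}).
Definition ind_vertex : finType := {x : G | x \in U}.
Definition ind_adj : rel ind_vertex := fun x y => adj (val x) (val y).
Lemma ind_adj_sym : symmetric ind_adj.
Proof. by move=> x y; rewrite /ind_adj adj_sym. Qed.
Lemma ind_adj_irr : irreflexive ind_adj.
Proof. by move=> x; rewrite /ind_adj adj_irr. Qed.
Definition induced : sgraph := SGraph ind_adj_sym ind_adj_irr.
End Induced.

Section DUnion.
Variables (G1 G2 : sgraph).
Definition du_adj : rel (G1 + G2)%type := fun x y =>
  match x, y with
  | inl a, inl b => adj a b
  | inr a, inr b => adj a b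
  | _, _ => false
  end.
Lemma du_adj_sym : symmetric du_adj.
Proof. by case=> a [] b //=; rewrite adj_sym. Qed.
Lemma du_adj_irr : irreflexive du_adj.
Proof. by case=> a /=; rewrite adj_irr. Qed.
Definition disjoint_union : sgraph := SGraph du_adj_sym du_adj_irr.
End DUnion.

Definition hereditary (C : sgraph -> Prop) : Prop :=
  forall (G : sgraph) (U : {set G}), C G -> C (induced U).
Definition closed_disjoint_union (C : sgraph -> Prop) : Prop :=
  forall G1 G2 : sgraph, C G1 -> C G2 -> C (disjoint_union G1 G2).

(** Isomorphism of radius-t views: f, g are mutually inverse bijections between
    the balls of radius t+1 around v and v' (so the far endpoints of edges
    incident to the radius-t ball are included), f v = v', and f preserves all
    edges incident to vertices of the radius-t ball. *)
Definition view_iso (G G' : sgraph) (t : nat) (v : G) (v' : G')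
    (f : G -> G') (g : G' -> G) : Prop :=
  [/\ f v = v',
      {in ball t.+1 v, forall x, f x \in ball t.+1 v' /\ g (f x) = x},
      {in ball t.+1 v', forall y, g y \in ball t.+1 v /\ f (g y) = y} &
      {in ball t v & ball t.+1 v, forall x y, adj x y = adj (f x) (f y)}].

Definition valid_ids (G : sgraph) (id : G -> nat) : Prop :=
  injective id /\ forall x, 0 < id x.

Definition algorithm := forall G : sgraph, (G -> nat) -> {set G}.

(** Deterministic LOCAL algorithm with round complexity r (guarantees for every
    assignment of distinct positive integer identifiers): the output of v only
    depends on the vertices at distance <= r, their identifiers, and the edges
    incident to them. *)
Definition local_alg (r : nat) (A : algorithm) : Prop :=
  forall (G G' : sgraph) (id : G -> nat) (id' : G' -> nat) (v : G) (v' : G')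
         (f : G -> G') (g : G' -> G),
    valid_ids id -> valid_ids id' -> view_iso r v v' f g ->
    {in ball r v, forall x, id' (f x) = id x} ->
    (v \in A G id) = (v' \in A G' id').

(** A problem whose feasible solutions are vertex subsets, given by its
    verifier: ver G S v is the decision of the verifier at v on input S. *)
Definition verifier := forall G : sgraph, {set G} -> G -> bool.

(** The verifier is a LOCAL algorithm with round complexity rho: its decision
    at v depends only on the radius-rho view of v, with the input labels
    (membership in S) of the vertices at distance <= rho. *)
Definition local_verifier (rho : nat) (ver : verifier) : Prop :=
  forall (G G' : sgraph) (S : {set G}) (S' : {set G'}) (v : G) (v' : G')
         (f : G -> G') (g : G' -> G),
    view_iso rho v v' f g ->
    {in ball rho v, forall x, (f x \in S') = (x \in S)} ->
    ver G S v = ver G' S' v'.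

Definition feasible_on (ver : verifier) (G : sgraph) (S X : {set G}) : Prop :=
  forall v, v \in X -> ver G S v.
Definition feasible (ver : verifier) (G : sgraph) (S : {set G}) : Prop :=
  forall v, ver G S v.

(** OPT(G, X): minimum size of a set feasible on X (convention: #|V(G)|+1 if
    there is none; this never matters below). *)
Definition OPT_on (ver : verifier) (G : sgraph) (X : {set G}) : nat :=
  \big[minn/#|G|.+1]_(S : {set G} | [forall v in X, ver G S v]) #|S|.
Definition OPT (ver : verifier) (G : sgraph) : nat := OPT_on ver [set: G].

Local Open Scope ring_scope.

Definition cuttable (R : realType) (C : sgraph -> Prop) (ver : verifier)
    (beta : R) : Prop :=
  forall (G : sgraph) (X : {set G}), C G ->
    exists Y : {set G}, X \subset Y /\
      (OPT ver (induced Y))%:R <= beta * (OPT_on ver X)%:R.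

Definition approximation (R : realType) (C : sgraph -> Prop) (ver : verifier)
    (A : algorithm) (alpha : R) : Prop :=
  forall (G : sgraph) (id : G -> nat), C G -> valid_ids id ->
    feasible ver (A G id) /\ (#|A G id|)%:R <= alpha * (OPT ver G)%:R.

Definition uniform_approximation (R : realType) (C : sgraph -> Prop)
    (ver : verifier) (A : algorithm) (k : nat) (gamma : R) : Prop :=
  forall (G : sgraph) (id : G -> nat), C G -> valid_ids id ->
    feasible ver (A G id) /\
    forall S : {set G},
      (#|A G id :&: S|)%:R <= gamma * (OPT_on ver (nbhd k S))%:R.

(** The output of [A] on a vertex [v] only depends on the radius-[r] view of
    [v], and the view of every [v] in [S] is the same in [G] and in the induced
    subgraph [G[Y]] given by cuttability for [X := N^(r+1)[S]], with the
    identifiers of [G] restricted to [Y].  Hence [A(G) :&: S] embeds into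
    [A(G[Y])], whose size is at most [alpha * OPT(G[Y]) <= alpha * beta *
    OPT(G, N^(r+1)[S])]. *)

From mathcomp Require Import all_boot all_order all_algebra.
From mathcomp Require Import reals.
Set Implicit Arguments. Unset Strict Implicit. Unset Printing Implicit Defensive.
Import Order.TTheory GRing.Theory Num.Theory.
Local Open Scope ring_scope.

Lemma nbhdS (G : sgraph) t (B : {set G}) :
  nbhd t.+1 B = nbhd t B :|: [set y | [exists x in nbhd t B, adj x y]].
Proof. by []. Qed.

Lemma nbhd_subS (G : sgraph) t (B : {set G}) : nbhd t B \subset nbhd t.+1 B.
Proof. by rewrite nbhdS subsetUl. Qed.

Lemma sub_nbhd (G : sgraph) t (B : {set G}) : B \subset nbhd t B.
Proof. by elim: t => [|t IH] //; exact: subset_trans IH (nbhd_subS _ _). Qed.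

Lemma nbhdSs (G : sgraph) t (B B' : {set G}) :
  B \subset B' -> nbhd t B \subset nbhd t B'.
Proof.
move=> sBB'; elim: t => [|t IH] //; rewrite !nbhdS.
apply/subsetP => y; rewrite !inE => /orP[By | /existsP[x /andP[Bx xy]]].
  by rewrite (subsetP IH y By).
by apply/orP; right; apply/existsP; exists x; rewrite (subsetP IH x Bx).
Qed.

Lemma ball_sub_nbhd (G : sgraph) t (S : {set G}) v :
  v \in S -> ball t v \subset nbhd t S.
Proof. by move=> Sv; apply: nbhdSs; rewrite sub1set. Qed.

Section InducedBall.

Variables (G : sgraph) (Y : {set G}).

Lemma ball_induced_val t (v y : induced Y) :
  y \in ball t v -> val y \in ball t (val v).
Proof.
elim: t y => [|t IH] y; first by rewrite /ball /= !inE => /eqP ->.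
rewrite /ball !nbhdS !inE => /orP[vy | /existsP[x /andP[vx xy]]].
  by rewrite IH.
by apply/orP; right; apply/existsP; exists (val x); rewrite IH.
Qed.

Lemma ball_inducedE t (v y : induced Y) :
  ball t (val v) \subset Y -> (y \in ball t v) = (val y \in ball t (val v)).
Proof.
move=> ballY; apply/idP/idP; first exact: ball_induced_val.
elim: t y ballY => [|t IH] y ballY.
  by rewrite /ball /= !inE => /eqP/val_inj ->.
have ballY' := subset_trans (nbhd_subS _ _) ballY.
rewrite /ball !nbhdS !inE => /orP[vy | /existsP[x /andP[vx xy]]].
  by rewrite IH.
apply/orP; right; apply/existsP; exists (Sub x (subsetP ballY' x vx)).
by rewrite IH.
Qed.

Lemma view_iso_induced t v (Yv : v \in Y) :
  ball t.+1 v \subset Y ->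
  view_iso t v (Sub v Yv : induced Y) (insubd (Sub v Yv : induced Y)) val.
Proof.
move=> ballY.
have insubdK_ball x :
  x \in ball t.+1 v -> val (insubd (Sub v Yv : induced Y) x : induced Y) = x.
  by move=> vx; rewrite insubdK // (subsetP ballY).
split.
- by apply: val_inj; rewrite insubdK.
- move=> x vx; split; last exact: insubdK_ball.
  (* [rewrite insubdK_ball] fails: the two [val]s differ in their elaboration. *)
  by rewrite ball_inducedE //; have := vx; rewrite -{1}(insubdK_ball x vx).
- move=> y vy; split; last exact: valKd.
  exact: ball_induced_val vy.
- move=> x y vx vy.
  by rewrite /= /ind_adj !insubdK_ball // (subsetP (nbhd_subS _ _)).
Qed.

Lemma valid_ids_induced (id : G -> nat) :
  valid_ids id -> valid_ids (id \o val : induced Y -> nat).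
Proof. by case=> id_inj id_pos; split=> [x y /id_inj/val_inj | y] //=. Qed.

Lemma local_alg_induced r (A : algorithm) (id : G -> nat) v (Yv : v \in Y) :
  local_alg r A -> valid_ids id -> ball r.+1 v \subset Y ->
  (v \in A G id) = ((Sub v Yv : induced Y) \in A (induced Y) (id \o val)).
Proof.
move=> locA id_valid ballY; apply: locA (view_iso_induced Yv ballY) _ => //.
  exact: valid_ids_induced.
move=> x vx /=; rewrite insubdK // (subsetP ballY) //.
exact: (subsetP (nbhd_subS _ _)).
Qed.

Lemma card_alg_induced r (A : algorithm) (id : G -> nat) (S : {set G}) :
  local_alg r A -> valid_ids id -> nbhd r.+1 S \subset Y ->
  (#|A G id :&: S| <= #|A (induced Y) (id \o val)|)%N.
Proof.
move=> locA id_valid SY.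
have AS_sub : A G id :&: S \subset val @: A (induced Y) (id \o val).
  apply/subsetP => v; rewrite inE => /andP[Av Sv].
  have ballY := subset_trans (ball_sub_nbhd r.+1 Sv) SY.
  have Yv := subsetP ballY v (subsetP (sub_nbhd _ _) v (set11 v)).
  by apply/imsetP; exists (Sub v Yv); rewrite // -(local_alg_induced Yv locA).
exact: leq_trans (subset_leq_card AS_sub) (leq_imset_card _ _).
Qed.

End InducedBall.

Theorem mainTheorem10 (R : realType) (C : sgraph -> Prop) (ver : verifier)
    (rho : nat) (beta : R) :
  hereditary C -> closed_disjoint_union C ->
  local_verifier rho ver -> cuttable C ver beta -> 0 < beta ->
  forall (r : nat) (alpha : R) (A : algorithm),
    0 < alpha -> local_alg r A -> approximation C ver A alpha ->
    uniform_approximation C ver A r.+1 (alpha * beta).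
Proof.
move=> herC _ _ cutC _ r alpha A alpha_gt0 locA apxA G id CG id_valid.
split=> [|S]; first by case: (apxA G id CG id_valid).
have [Y [SY optY]] := cutC G (nbhd r.+1 S) CG.
have [_ apxY] := apxA (induced Y) (id \o val) (herC G Y CG) (valid_ids_induced Y id_valid).
apply: le_trans (_ : (#|A (induced Y) (id \o val)|)%:R <= _).
  by rewrite ler_nat (card_alg_induced locA).
by rewrite (le_trans apxY) // -mulrA ler_wpM2l // ltW.
Qed.
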